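(* Let $(X_n)_{n\in\mathbb{N}}$ be a sequence of finite graphs with $\deg(X_n)\leq D$ and $|X_n|\to\infty$. Given a constant $\epsilon>0$, either there exist $\epsilon$-Følner sets $F_n\subset X_n$ such that $\limsup \frac{|F_n|}{|X_n|}=\frac{1}{2}$ or there exists $\alpha>0$ and $\alpha$-big subgraphs $Y_n\subseteq X_n$ that are $(\delta,D)$-expanders for some $\delta>0$.
   Context: Graphs are finite with no multiple edges nor loops; $\deg(X)$ is the maximum vertex degree and $|X|$ the number of vertices. For $A\subseteq X$, $\partial A$ is the set of edges joining $A$ to $X\smallsetminus A$. A non-empty $A\subset X$ is an $\epsilon$-Følner set if $|A|\leq\frac12|X|$ and $|\partial A|\leq\epsilon|A|$. $X$ is an $\epsilon$-expander if it has no $\epsilon$-Følner sets, and an $(\epsilon,D)$-expander if moreover $\deg(X)\leq D$. Subgraphs are induced subgraphs on vertex subsets; $Y\subseteq X$ is $\alpha$-big if $|Y|\geq\alpha|X|$. *)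

From mathcomp Require Import all_boot all_order all_algebra.
From mathcomp Require Import all_classical all_reals all_analysis.
Set Implicit Arguments. Unset Strict Implicit. Unset Printing Implicit Defensive.
Import Order.TTheory GRing.Theory Num.Theory.
Local Open Scope ring_scope.

Definition simple_graph (T : finType) (e : rel T) : Prop :=
  symmetric e /\ irreflexive e.

Definition deg_le (T : finType) (e : rel T) (V : {set T}) (D : nat) : Prop :=
  forall x, x \in V -> (#|[set y in V | e x y]| <= D)%N.

(* Edge boundary of A inside the induced subgraph on V:
   edges {x,y} with x in A and y in V \ A (each edge counted once). *)
Definition bdry (T : finType) (e : rel T) (V A : {set T}) : {set T * T} :=
  [set p | [&& p.1 \in A, p.2 \in V :\: A & e p.1 p.2]].

Definition folner (R : realType) (T : finType) (e : rel T) (V : {set T})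
    (eps : R) (A : {set T}) : Prop :=
  [/\ A != finset.set0, A \subset V, (2 * #|A| <= #|V|)%N
    & (#|bdry e V A|%:R <= eps * #|A|%:R :> R)].

Definition expander (R : realType) (T : finType) (e : rel T) (V : {set T})
    (eps : R) : Prop :=
  forall A : {set T}, ~ folner e V eps A.

Definition expanderD (R : realType) (T : finType) (e : rel T) (V : {set T})
    (eps : R) (D : nat) : Prop :=
  expander e V eps /\ deg_le e V D.

From mathcomp Require Import all_boot all_order all_algebra.
From mathcomp Require Import all_classical all_reals all_analysis.
From mathcomp Require Import zify ring lra.
Import Order.TTheory GRing.Theory Num.Theory.
Local Open Scope ring_scope.

(* Fix in each X_n an eps-Folner set F_n of maximal size.  If |F_n|/|X_n| does
   not have limsup 1/2, it eventually stays below some b < 1/2.  Cutting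
   eps/4k-Folner sets off X_n recursively, at most k levels deep, either stops
   at a large expander or yields, by gluing the pieces, a set of size close to
   |X_n|/2 whose boundary is at most eps|X_n|/4; such a set would be an
   eps-Folner set larger than F_n.  The finitely many remaining X_n are covered
   by single vertices. *)

Section InducedSubgraphs.
Context {R : realType} {T : finType} (e : rel T).

Lemma bdry_set0 (S : {set T}) : bdry e S finset.set0 = finset.set0.
Proof. by apply/setP => -[a b]; rewrite !inE. Qed.

Lemma deg_le_sub [V W : {set T}] [D : nat] :
  V \subset W -> deg_le e W D -> deg_le e V D.
Proof.
move=> sVW hW a aV; apply: leq_trans (hW a (fintype.subsetP sVW a aV)).
apply: subset_leq_card; apply/fintype.subsetP => y; rewrite !inE => /andP [yV ->].
by rewrite (fintype.subsetP sVW y yV).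
Qed.

Lemma expander_card_le1 (Y : {set T}) (d : R) : (#|Y| <= 1)%N -> expander e Y d.
Proof. by move=> Y1 A [+ _ A2 _]; rewrite -card_gt0; lia. Qed.

Lemma card_bdry_sub (S B W : {set T}) : W \subset B ->
  (#|bdry e S W| <= #|bdry e B W| + #|bdry e S B|)%N.
Proof.
move=> sWB; rewrite -cardsUI; apply: leq_trans (leq_addr _ _).
apply/subset_leq_card/fintype.subsetP => -[a b].
rewrite !inE /= => /and3P [aW /andP [bW bS] eab].
by rewrite aW bW eab bS (fintype.subsetP sWB a aW) !andbT orbN.
Qed.

Lemma card_bdry_setU (S B W : {set T}) :
  (#|bdry e S (B :|: W)| <= #|bdry e (S :\: B) W| + #|bdry e S B|)%N.
Proof.
rewrite -cardsUI; apply: leq_trans (leq_addr _ _).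
apply/subset_leq_card/fintype.subsetP => -[a b].
rewrite !inE /= negb_or => /and3P [aBW /andP [/andP [bB bW] bS] eab].
by rewrite bB bW bS eab /= !andbT orbC.
Qed.

Definition has_subexpander (S : {set T}) (m : nat) (d : R) : Prop :=
  exists2 Y : {set T}, Y \subset S & (m <= #|Y|)%N /\ expander e Y d.

Definition has_sparse_cuts (S : {set T}) (m : nat) (c : R) : Prop :=
  forall t, (t <= #|S|)%N -> exists W : {set T},
    [/\ W \subset S, (#|W| <= t)%N, (t < #|W| + m)%N
       & #|bdry e S W|%:R <= c * #|S|%:R].

Lemma sparse_cuts_small (S : {set T}) (m : nat) (c : R) :
  0 <= c -> (#|S| < m)%N -> has_sparse_cuts S m c.
Proof.
move=> c0 Sm t tS; exists finset.set0.
by rewrite finset.sub0set bdry_set0 !cards0 mulr_ge0 //; split => //; lia.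
Qed.

Lemma subexpander_trivial (d : R) :
  exists2 Y : {set T}, (#|T| <= #|T| * #|Y|)%N & expander e Y d.
Proof.
have [T0|/card_gt0P [a _]] := posnP #|T|.
  by exists finset.set0; [rewrite T0 | apply: expander_card_le1; rewrite cards0].
by exists [set a]; [rewrite cards1 muln1 | apply: expander_card_le1; rewrite cards1].
Qed.

Lemma folner_maximum (eps : R) : exists F : {set T},
  (F = finset.set0 \/ folner e [set: T] eps F) /\
  forall G, folner e [set: T] eps G -> (#|G| <= #|F|)%N.
Proof.
pose P : pred {set T} := fun A => `[< A = finset.set0 \/ folner e [set: T] eps A >].
have P0 : P finset.set0 by apply/asboolP; left.
case: (arg_maxnP (fun A : {set T} => #|A|) P0) => F /asboolP PF maxF.
by exists F; split => // G fG; apply: maxF; apply/asboolP; right.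
Qed.

Hypothesis esym : symmetric e.

Lemma card_bdry_setD (S A : {set T}) :
  (#|bdry e S (S :\: A)| <= #|bdry e S A|)%N.
Proof.
rewrite -(card_imset _ (can_inj (@swap_pairK T T))); apply/subset_leq_card/fintype.subsetP.
move=> _ /imsetP [[a b] + ->]; rewrite !inE /= negb_and negbK.
case/and3P => aSA /andP [/orP [bA|/negbTE -> //] _] eab.
by rewrite bA aSA esym.
Qed.

Lemma sparse_cuts_split (S A : {set T}) (m : nat) (c d : R) :
  0 <= c -> 0 <= d -> A \subset S -> #|bdry e S A|%:R <= d * #|A|%:R ->
  has_sparse_cuts A m c -> has_sparse_cuts (S :\: A) m (c + d) ->
  has_sparse_cuts S m (c + d).
Proof.
move=> c0 d0 sAS bdA cutA cutB t tS.
set B := S :\: A; have sBS : B \subset S by apply: subsetDl.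
have cardS : #|S| = (#|A| + #|B|)%N by rewrite -(cardsID A S) (finset.setIidPr sAS).
have bdB : #|bdry e S B|%:R <= d * #|A|%:R.
  by apply: le_trans bdA; rewrite ler_nat card_bdry_setD.
have [tB|Bt] := leqP t #|B|.
  have [W [sWB Wt tW bdW]] := cutB t tB.
  exists W; split => //; first exact: fintype.subset_trans sBS.
  have := @card_bdry_sub S _ _ sWB; rewrite -(ler_nat R) natrD cardS natrD.
  have := mulr_ge0 c0 (ler0n R #|A|); move: bdW bdB; rewrite -/B; lra.
have [|W [sWA Wt tW bdW]] := cutA (t - #|B|)%N; first by lia.
have cardBW : #|B :|: W| = (#|B| + #|W|)%N.
  rewrite -cardsUI (_ : B :&: W = finset.set0) ?cards0 ?addn0 //.
  apply/setP => x; rewrite !inE.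
  by case: (boolP (x \in W)) => [/(fintype.subsetP sWA) ->|_]; rewrite ?andbF.
exists (B :|: W); split; rewrite ?cardBW; try lia.
  by rewrite finset.subUset sBS (fintype.subset_trans sWA sAS).
have := card_bdry_setU S B W; rewrite -(ler_nat R) natrD.
rewrite /B finset.setDDr finset.setDv finset.set0U (finset.setIidPr sAS) -/B cardS natrD.
have := mulr_ge0 (addr_ge0 c0 d0) (ler0n R #|B|); move: bdW bdA; lra.
Qed.

Lemma subexpander_or_sparse_cuts (m k : nat) (d : R) (S : {set T}) :
  0 <= d -> (#|S| < m * 2 ^ k)%N ->
  has_subexpander S m d \/ has_sparse_cuts S m (d * k%:R).
Proof.
move=> d0; elim: k S => [|k IHk] S.
  by rewrite expn0 muln1 => Sm; right; apply: sparse_cuts_small; rewrite ?mulr0.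
(* A Folner set A has at most half the vertices of S, so the recursion on A
   uses one level less, while the recursion on S :\: A is on a smaller set. *)
have [s] := ubnP #|S|; elim: s S => // s IHs S /ltnSE Ss hS.
have [Sm|mS] := ltnP #|S| m; first by right; apply: sparse_cuts_small; rewrite ?mulr_ge0.
have [expS|/existsNP [A /contrapT [A0 sAS A2 bdA]]] := pselect (expander e S d).
  by left; exists S.
have hA : (#|A| < m * 2 ^ k)%N by move: hS; rewrite expnS; lia.
have [[Y sYA YP]|cutA] := IHk A hA.
  by left; exists Y => //; apply: fintype.subset_trans sAS.
have sBS : S :\: A \subset S by apply: subsetDl.
have cardB : (#|S :\: A| < #|S|)%N.
  by rewrite cardsDS // -subn_gt0 subKn ?card_gt0 // subset_leq_card.
have [||[Y sYB YP]|cutB] := IHs (S :\: A).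
- exact: leq_trans cardB Ss.
- exact: leq_ltn_trans (ltnW cardB) hS.
- by left; exists Y => //; apply: fintype.subset_trans sBS.
right; rewrite -natr1 mulrDr mulr1 in cutB *.
exact: sparse_cuts_split (mulr_ge0 d0 (ler0n R k)) d0 sAS bdA cutA cutB.
Qed.

Lemma subexpander_or_large_folner [eps : R] [q : nat] :
  0 < eps -> (4 <= q)%N -> (2 * q <= #|T|)%N ->
  (exists2 Y : {set T}, (#|T| <= 2 * q * #|Y|)%N & expander e Y (eps / (4 * q.+1%:R)))
  \/ (exists2 W : {set T}, folner e [set: T] eps W
       & (2^-1 - q%:R^-1) * #|T|%:R < #|W|%:R :> R).
Proof.
(* With m = |T|/q and k = q + 1 we have |T| < m 2^k, and a cut at size |T|/2
   misses it by fewer than m <= |T|/q vertices. *)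
move=> eps0 q4 qT; set x := #|T|; set m := (x %/ q)%N.
have q0 : (0 < q)%N by lia.
have mq : (m * q <= x)%N := leq_divM x q.
have xmq : (x < m.+1 * q)%N := ltn_ceil x q0.
have q2q : (q < 2 ^ q)%N := ltn_expl q (ltnSn 1).
have d0 : 0 <= eps / (4 * q.+1%:R) by rewrite ltW // divr_gt0 // mulr_gt0.
have [|[Y _ [mY expY]]|cuts] := subexpander_or_sparse_cuts m q.+1 _ [set: T] d0.
- by rewrite cardsT expnS; nia.
- by left; exists Y => //; nia.
right; have [|W [_ Wt tW bdW]] := cuts x./2; first by rewrite cardsT leq_half_double; lia.
move: tW Wt; rewrite ltn_half_double geq_half_double -!mul2n => tW Wt.
have q_inv : q%:R^-1 <= 4^-1 :> R.
  by rewrite lef_pV2 ?posrE ?ltr0n ?ler_nat //; apply: leq_trans q4.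
have m_le : m%:R <= q%:R^-1 * x%:R :> R.
  by rewrite mulrC ler_pdivlMr ?ltr0n // -natrM ler_nat.
have Wbig : (2^-1 - q%:R^-1) * x%:R < #|W|%:R :> R.
  by move: tW; rewrite -(ltr_nat R) natrM natrD; lra.
exists W => //; split.
- by rewrite -card_gt0 -(ltr0n R); apply: le_lt_trans Wbig; rewrite mulr_ge0 //; lra.
- exact: finset.subsetT.
- by rewrite cardsT.
- apply: le_trans bdW _; rewrite cardsT -/x.
  have -> : eps / (4 * q.+1%:R) * q.+1%:R * x%:R = eps * (x%:R / 4).
    by field; rewrite addrC natr1 pnatr_eq0.
  rewrite ler_wpM2l ?(ltW eps0) //.
  by have := ler_wpM2r (ler0n R x) q_inv; lra.
Qed.

Lemma subexpander_of_small_folner [eps b : R] [q : nat] :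
  0 < eps -> (4 <= q)%N -> q%:R^-1 <= 2^-1 - b -> (2 * q <= #|T|)%N ->
  (forall G, folner e [set: T] eps G -> #|G|%:R <= b * #|T|%:R) ->
  exists2 Y : {set T}, (#|T| <= 2 * q * #|Y|)%N & expander e Y (eps / (4 * q.+1%:R)).
Proof.
move=> eps0 q4 qb qT smallF.
have [//|[W fW Wbig]] := subexpander_or_large_folner eps0 q4 qT; exfalso.
have := smallF W fW; rewrite leNgt => /negP; apply; apply: le_lt_trans Wbig.
by have := ler_wpM2r (ler0n R #|T|) qb; lra.
Qed.

End InducedSubgraphs.

Lemma ratio_le_half (R : realFieldType) (a b : nat) :
  (2 * a <= b)%N -> a%:R / b%:R <= 2^-1 :> R.
Proof.
case: b => [|b] ab; first by rewrite invr0 mulr0.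
by rewrite ler_pdivrMr ?ltr0n //; move: ab; rewrite -(ler_nat R) natrM; lra.
Qed.

Lemma limn_sup_eq_ub_or_eventually_le [R : realType] [u : R^nat] [c : R] :
  (forall n, u n <= c) ->
  limn_sup u = c \/ exists2 b, b < c & exists N, forall n, (N <= n)%N -> u n <= b.
Proof.
move=> uc.
have [H|] := pselect (forall b, b < c -> forall N, exists2 n, (N <= n)%N & b < u n);
  last first.
  move=> /existsNP [b /not_implyP [bc /existsNP [N NN]]]; right; exists b => //.
  by exists N => n Nn; rewrite leNgt; apply/negP => bu; apply: NN; exists n.
left; rewrite /limn_sup (_ : sups u = fun=> c) ?lim_cst //; apply/funext => N /=.
have ub : ubound (sdrop u N) c by move=> _ [n _ <-].
apply/eqP; rewrite eq_le ge_sup //=; last by exists (u N); exists N => /=.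
rewrite leNgt; apply/negP => /H /(_ N) [n Nn]; apply/negP; rewrite -leNgt.
by apply: ub_le_sup; [exists c | exists n].
Qed.

Lemma uniform_subexpanders [R : realType] [T : nat -> finType]
    [E : forall n, rel (T n)] [d : R] (c N0 : nat) :
  (forall n, (N0 <= n)%N ->
     exists2 Y : {set T n}, (#|T n| <= c * #|Y|)%N & expander (E n) Y d) ->
  exists2 c' : nat, (0 < c')%N & forall n,
     exists2 Y : {set T n}, (#|T n| <= c' * #|Y|)%N & expander (E n) Y d.
Proof.
move=> hY; pose M := (\max_(i < N0) #|T i|)%N.
exists (c.+1 * M.+1)%N => // n; have [nN0|/hY [Y TY expY]] := ltnP n N0.
  have TM : (#|T n| <= M)%N := leq_bigmax (F := fun i : 'I_N0 => #|T i|) (Ordinal nN0).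
  by have [Y TY expY] := subexpander_trivial (E n) d; exists Y => //; nia.
by exists Y => //; nia.
Qed.

Lemma exists_nat_inv_le [R : archiRealFieldType] (a : R) (N : nat) :
  0 < a -> exists2 q : nat, (N <= q)%N & q%:R^-1 <= a.
Proof.
move=> a0; set q := maxn N.+1 (Num.Def.archi_bound a^-1).
have q_gt0 : (0 < q)%N by rewrite leq_max.
exists q; first by rewrite leq_max ltnW.
rewrite -[a in _ <= a]invrK lef_pV2 ?posrE ?invr_gt0 ?ltr0n //.
apply/ltW/(lt_le_trans (archi_boundP _)); first by rewrite invr_ge0 ltW.
by rewrite ler_nat leq_maxr.
Qed.

Theorem corollary2p3 (R : realType) (T : nat -> finType)
    (E : forall n, rel (T n)) (D : nat) (eps : R)
    (hsimple : forall n, simple_graph (E n))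
    (hdeg : forall n, deg_le (E n) [set: T n] D)
    (hcard : forall M : nat, exists N : nat, forall n, (N <= n)%N -> (M <= #|T n|)%N)
    (heps : 0 < eps) :
  (exists F : forall n, {set T n},
      (forall n, F n = finset.set0 \/ folner (E n) [set: T n] eps (F n)) /\
      limn_sup (fun n => (#|F n|%:R / #|T n|%:R : R)) = 2^-1)
  \/
  (exists (alpha delta : R), 0 < alpha /\ 0 < delta /\
     exists Y : forall n, {set T n},
       forall n, alpha * #|T n|%:R <= #|Y n|%:R /\ expanderD (E n) (Y n) delta D).
Proof.
have [F /all_and2 [Ffol Fmax]] := all_sig (fun n => cid (folner_maximum (E n) eps)).
have Fhalf n : #|F n|%:R / #|T n|%:R <= 2^-1 :> R.
  by apply: ratio_le_half; case: (Ffol n) => [->|[_ _ + _]]; rewrite ?cards0 -?cardsT.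
have [limF|[b b_lt [N Fb]]] := limn_sup_eq_ub_or_eventually_le Fhalf.
  by left; exists F.
right; have [|q q4 qb] := exists_nat_inv_le (2^-1 - b) 4; first by rewrite subr_gt0.
have [N2 hN2] := hcard (2 * q)%N; set delta := eps / (4 * q.+1%:R).
have [c c_gt0 hY] :
    exists2 c : nat, (0 < c)%N & forall n,
      exists2 Y : {set T n}, (#|T n| <= c * #|Y|)%N & expander (E n) Y delta.
  apply: (uniform_subexpanders (2 * q) (maxn N N2)).
  move=> n; rewrite geq_max => /andP [Nn N2n].
  apply: (subexpander_of_small_folner (E n) (hsimple n).1 heps q4 qb (hN2 n N2n) _) => G fG.
  have := Fb n Nn; rewrite ler_pdivrMr ?ltr0n; last by have := hN2 n N2n; lia.
  by apply: le_trans; rewrite ler_nat Fmax.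
have [Y TY expY] := all_sig2 (fun n => cid2 (hY n)).
exists c%:R^-1, delta; split; first by rewrite invr_gt0 ltr0n.
split; first by rewrite divr_gt0 // mulr_gt0 ?ltr0n.
exists Y => n; split; last split.
- by rewrite mulrC ler_pdivrMr ?ltr0n // -natrM ler_nat mulnC.
- exact: expY.
- exact: (deg_le_sub (E n) (finset.subsetT (Y n)) (hdeg n)).
Qed.
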